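(* Let $\mathfrak{g}$, $A$, $E$, $S$, $p_1,\dots,p_r$, $\widehat p_1,\dots,\widehat p_r$ be as in the context and let $h^\vee$ be the dual Coxeter number of $\mathfrak{g}$. Suppose there is a polynomial $f\in\mathbb{C}[u_1,\dots,u_r]$, homogeneous of degree $h^\vee$ for the grading $\deg u_i=d_i-1$, such that $f(\widehat p_1,\dots,\widehat p_r)=0$ in $E$ and the coefficient of $u_1^{h^\vee}$ in $f$ is nonzero. Then $S^{h^\vee}=0$ in $A$.
   Context: Let $\mathfrak{g}$ be a simple finite-dimensional complex Lie algebra with a fixed nondegenerate invariant symmetric bilinear form, used to identify $\mathfrak{g}$ with $\mathfrak{g}^*$. Let $n=\dim\mathfrak{g}$, let $e_1,\dots,e_n$ be an orthonormal basis with coordinates $z_1,\dots,z_n$. Let $R$ be the exterior algebra on odd generators $x_1,\dots,x_n,y_1,\dots,y_n$ ($R\cong\wedge(\mathfrak{g}\oplus\mathfrak{g})$), bigraded with $x_a$ in degree $(1,0)$, $y_a$ in degree $(0,1)$, with $\mathfrak{g}$ acting by derivations so that $(x_a)$, $(y_a)$ transform as coordinates of two copies of $\mathfrak{g}$. Put $X=\sum_a x_ae_a$, $Y=\sum_a y_ae_a$, and for $U=\sum u_ae_a$, $V=\sum v_ae_a$ with $u_a,v_a$ odd set $\{U,V\}=\sum_{a,b}u_av_b[e_a,e_b]$. Let $I\subset R$ be the ideal generated by the $e_c$-coefficients of $\{X,X\}$, $\{X,Y\}$, $\{Y,Y\}$, and $A=R/I$. Let $S$ be the image in $A$ of $\sum_a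 x_ay_a$ (proportional to $\mathrm{Tr}_V(XY)$ for a nontrivial irreducible representation $V$). Let $J\subset R$ be the ideal generated by the $e_c$-coefficients of $\{X,X\}$ and $\{Y,Y\}$, and $E=(R/J)^{\mathfrak{g}}$. For homogeneous $F\in(S\mathfrak{g})^{\mathfrak{g}}$ of degree $\ge2$ define $\widehat F=\sum_{a,b}\frac{\partial^2F}{\partial z_a\partial z_b}(\{X,Y\})\,x_ay_b\in E$, substituting for $z_c$ the $e_c$-coefficient of $\{X,Y\}$. Let $p_1,\dots,p_r$ be homogeneous algebraically independent generators of $(S\mathfrak{g})^{\mathfrak{g}}$ of degrees $d_1=2\le\dots\le d_r$ (so $p_1$ is the quadratic invariant). *)

From HB Require Import structures.
From mathcomp Require Import all_boot all_order all_algebra.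
From mathcomp Require Import mpoly.
From mathcomp Require Import complex.
From mathcomp Require Import reals.

Set Implicit Arguments.
Unset Strict Implicit.
Unset Printing Implicit Defensive.

Import Order.TTheory GRing.Theory Num.Theory.
Local Open Scope ring_scope.

Notation Cplx R := (R[i])%C.

Section Lie.
Variables (F : fieldType) (n : nat).

(* A Lie algebra g = F^n given in an orthonormal basis e_1..e_n (for the    *)
(* standard dot product, which plays the role of the fixed invariant form)   *)
(* by its structure constants: [e_a, e_b] = \sum_c c a b c e_c.              *)
Definition lie_br (c : 'I_n -> 'I_n -> 'I_n -> F) (u v : 'rV[F]_n) : 'rV[F]_n :=
  \row_k \sum_a \sum_b u 0 a * v 0 b * c a b k.

Definition basis_vec (i : 'I_n) : 'rV[F]_n := \row_j (i == j)%:R.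

Definition is_orthonormal_lie (c : 'I_n -> 'I_n -> 'I_n -> F) : Prop :=
  [/\ forall u v, lie_br c u v = - lie_br c v u,
      forall u v w, lie_br c u (lie_br c v w) + lie_br c v (lie_br c w u)
                    + lie_br c w (lie_br c u v) = 0
    & forall u v w, (lie_br c u v *m w^T) = (u *m (lie_br c v w)^T)].

Definition lie_ideal (c : 'I_n -> 'I_n -> 'I_n -> F) (V : 'M[F]_n) : Prop :=
  forall u v : 'rV[F]_n, (u <= V)%MS -> (lie_br c u v <= V)%MS.

Definition lie_simple (c : 'I_n -> 'I_n -> 'I_n -> F) : Prop :=
  (exists u v, lie_br c u v != 0) /\
  forall V : 'M[F]_n, lie_ideal c V -> \rank V = 0%N \/ \rank V = n.

Definition ad_mx (c : 'I_n -> 'I_n -> 'I_n -> F) (u : 'rV[F]_n) : 'M[F]_n :=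
  \matrix_(i, j) lie_br c u (basis_vec i) 0 j.

Definition killing (c : 'I_n -> 'I_n -> 'I_n -> F) (u v : 'rV[F]_n) : F :=
  \tr (ad_mx c u *m ad_mx c v).

Definition toral (c : 'I_n -> 'I_n -> 'I_n -> F) (H : 'M[F]_n) : Prop :=
  (forall u v, (u <= H)%MS -> (v <= H)%MS -> lie_br c u v = 0) /\
  (forall u, (u <= H)%MS -> diagonalizable (ad_mx c u)).

Definition cartan (c : 'I_n -> 'I_n -> 'I_n -> F) (H : 'M[F]_n) : Prop :=
  toral c H /\ forall H' : 'M[F]_n, toral c H' -> (H <= H')%MS -> (H' <= H)%MS.

(* roots of H, identified with elements t of H via the Killing form:        *)
(* alpha(h) = killing t h; the root alpha is nonzero and has a nonzero root  *)
(* vector.  (alpha, alpha) w.r.t. the Killing form is then killing t t.      *)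
Definition root_of (c : 'I_n -> 'I_n -> 'I_n -> F) (H : 'M[F]_n) (t : 'rV[F]_n) : Prop :=
  [/\ (t <= H)%MS, t != 0 &
      exists2 x : 'rV[F]_n, x != 0 &
        forall h, (h <= H)%MS -> lie_br c h x = killing c t h *: x].

End Lie.

(* Dual Coxeter number: (theta, theta) = 1 / h^vee for the Killing form,     *)
(* theta a long root (= a root of maximal length).                           *)
Definition dual_coxeter (R : realType) (n : nat)
  (c : 'I_n -> 'I_n -> 'I_n -> Cplx R) (hv : nat) : Prop :=
  exists H : 'M[Cplx R]_n, cartan c H /\
   exists2 t, root_of c H t &
     killing c t t = (hv%:R)^-1 /\
     forall t', root_of c H t' -> killing c t' t' <= killing c t t.

(* The exterior algebra R = /\(g + g) on generators x_1..x_n, y_1..y_n.       *)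
(* Generator number i < n is x_i (lshift), n + i is y_i (rshift).  Elements   *)
(* are functions from subsets (monomials in increasing order) to scalars.     *)
Section Exterior.
Variables (F : fieldType) (n : nat).

Definition ext := {ffun {set 'I_(n + n)} -> F}.

Definition ext_sign (A B : {set 'I_(n + n)}) : F :=
  (-1) ^+ #|[set p : 'I_(n + n) * 'I_(n + n) |
             [&& p.1 \in A, p.2 \in B & (p.2 < p.1)%N]]|.

Definition ext_mul (u v : ext) : ext :=
  [ffun S => \sum_(A : {set 'I_(n + n)}) \sum_(B : {set 'I_(n + n)}
       | [disjoint A & B] && (A :|: B == S)) ext_sign A B * u A * v B].

Definition ext_one : ext := [ffun S => (S == set0)%:R].
Definition ext_add (u v : ext) : ext := [ffun S => u S + v S].
Definition ext_scale (a : F) (u : ext) : ext := [ffun S => a * u S].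
Definition ext_zero : ext := [ffun _ => 0].
Definition ext_sum (I : Type) (s : seq I) (f : I -> ext) : ext :=
  foldr (fun i acc => ext_add (f i) acc) ext_zero s.
Definition ext_exp (u : ext) (k : nat) : ext := iter k (ext_mul u) ext_one.

Definition ext_gen (i : 'I_(n + n)) : ext := [ffun S => (S == [set i])%:R].
Definition xg (a : 'I_n) : ext := ext_gen (lshift n a).
Definition yg (a : 'I_n) : ext := ext_gen (rshift n a).

Definition in_ideal (I : Type) (gens : I -> ext) (z : ext) : Prop :=
  exists l : seq (ext * I * ext),
    z = ext_sum l (fun t => ext_mul (ext_mul t.1.1 (gens t.1.2)) t.2).

(* e_c-coefficients of {U,V} = sum_{a,b} u_a v_b [e_a, e_b] *)
Definition brace (c : 'I_n -> 'I_n -> 'I_n -> F) (u v : 'I_n -> ext) (k : 'I_n) : ext :=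
  ext_sum (enum 'I_n) (fun a => ext_sum (enum 'I_n) (fun b =>
     ext_scale (c a b k) (ext_mul (u a) (v b)))).

(* generators of I : coefficients of {X,X}, {X,Y}, {Y,Y} *)
Definition gens_I (c : 'I_n -> 'I_n -> 'I_n -> F) (k : 'I_n * 'I_3) : ext :=
  match nat_of_ord k.2 with
  | 0%N => brace c xg xg k.1
  | 1%N => brace c xg yg k.1
  | _ => brace c yg yg k.1
  end.

(* generators of J : coefficients of {X,X}, {Y,Y} *)
Definition gens_J (c : 'I_n -> 'I_n -> 'I_n -> F) (k : 'I_n * bool) : ext :=
  if k.2 then brace c xg xg k.1 else brace c yg yg k.1.

Definition S_elt : ext := ext_sum (enum 'I_n) (fun a => ext_mul (xg a) (yg a)).

(* evaluation of a polynomial at (pairwise commuting, even) elements of R *)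
Definition ext_eval (m : nat) (P : {mpoly F[m]}) (v : 'I_m -> ext) : ext :=
  ext_sum (msupp P) (fun mm => ext_scale (P@_mm)
     (foldr (fun i acc => ext_mul (ext_exp (v i) (mm i)) acc) ext_one (enum 'I_m))).

(* hat F = sum_{a,b} (d^2 F / dz_a dz_b)({X,Y}) x_a y_b *)
Definition hat (c : 'I_n -> 'I_n -> 'I_n -> F) (P : {mpoly F[n]}) : ext :=
  ext_sum (enum 'I_n) (fun a => ext_sum (enum 'I_n) (fun b =>
    ext_mul (ext_eval (mderiv b (mderiv a P)) (brace c xg yg))
            (ext_mul (xg a) (yg b)))).

End Exterior.

(* Invariant polynomials (S g)^g  (g acting by derivations on coordinates)   *)
Definition invariant_poly (F : fieldType) (n : nat)
  (c : 'I_n -> 'I_n -> 'I_n -> F) (P : {mpoly F[n]}) : Prop :=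
  forall a : 'I_n,
    \sum_(b < n) \sum_(k < n) c a b k *: ('X_b * mderiv k P) = 0.

(* p_1..p_r: homogeneous, algebraically independent generators of (S g)^g  *)
(* of nondecreasing degrees d_1 = 2 <= ... <= d_r (index 0 = p_1).          *)
Definition invariant_generators (F : fieldType) (n r : nat)
  (c : 'I_n -> 'I_n -> 'I_n -> F) (p : 'I_r -> {mpoly F[n]}) (d : 'I_r -> nat) : Prop :=
  [/\ forall i, invariant_poly c (p i),
      forall i, p i \is (d i).-homog,
      forall Q : {mpoly F[n]}, invariant_poly c Q ->
        exists P : {mpoly F[r]}, Q = comp_mpoly [tuple p i | i < r] P,
      forall P : {mpoly F[r]}, comp_mpoly [tuple p i | i < r] P = 0 -> P = 0
    & (forall i j : 'I_r, (i <= j)%N -> (d i <= d j)%N) /\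
      (forall i : 'I_r, nat_of_ord i = 0%N -> d i = 2%N)].

Definition wt_homog (F : fieldType) (r : nat) (d : 'I_r -> nat) (D : nat)
  (f : {mpoly F[r]}) : Prop :=
  forall m, m \in msupp f -> (\sum_(i < r) m i * (d i).-1)%N = D.

(* In A the coefficients of {X,Y} vanish, so hat F = 0 in A as soon as F has
   degree at least 3, every entry of its Hessian having positive degree.  The
   Hessian of the quadratic invariant p_1 is g-invariant, hence a nonzero scalar
   lam by Schur's lemma, so hat p_1 = lam S.  Algebraic independence makes p_1 the
   only quadratic generator, and weight homogeneity leaves u_1^(h^vee) as the only
   monomial of f in u_1 alone.  As J lies in I, in A we get
   0 = f(hat p) = f_(u_1^(h^vee)) lam^(h^vee) S^(h^vee). *)

From HB Require Import structures.
From mathcomp Require Import all_boot all_order all_algebra.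
From mathcomp Require Import mpoly.
From mathcomp Require Import complex.
From mathcomp Require Import reals.
From mathcomp Require Import ring zify.
Import GRing.Theory Num.Theory.
Local Open Scope ring_scope.
Set Implicit Arguments.
Unset Strict Implicit.
Unset Printing Implicit Defensive.

Section ExteriorAlgebra.
Variables (F : fieldType) (n : nat).
Local Notation ext := {ffun {set 'I_(n + n)} -> F}.
Local Notation mul := (@ext_mul F n).
Local Notation scale := (@ext_scale F n).
Local Notation one := (ext_one F n).
Implicit Types (u v w : ext) (A B C : {set 'I_(n + n)}).

Lemma ext_addE u v : ext_add u v = u + v.
Proof. by apply/ffunP => S; rewrite !ffunE. Qed.

Lemma ext_zeroE : ext_zero F n = 0.
Proof. by apply/ffunP => S; rewrite !ffunE. Qed.

Lemma ext_sumE (I : Type) (s : seq I) (f : I -> ext) :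
  ext_sum s f = \sum_(i <- s) f i.
Proof.
elim: s => [|x s IH] /=; first by rewrite big_nil ext_zeroE.
by rewrite big_cons ext_addE IH.
Qed.

Lemma ext_scale0 u : scale 0 u = 0.
Proof. by apply/ffunP => S; rewrite !ffunE mul0r. Qed.

Lemma ext_scale1 u : scale 1 u = u.
Proof. by apply/ffunP => S; rewrite !ffunE mul1r. Qed.

Lemma ext_scaleN1 u : scale (-1) u = - u.
Proof. by apply/ffunP => S; rewrite !ffunE mulN1r. Qed.

Lemma ext_scaler0 a : scale a 0 = 0.
Proof. by apply/ffunP => S; rewrite !ffunE mulr0. Qed.

Lemma ext_scaleA a b u : scale a (scale b u) = scale (a * b) u.
Proof. by apply/ffunP => S; rewrite !ffunE mulrA. Qed.

Lemma ext_scale_sum a (I : Type) (s : seq I) (P : pred I) (f : I -> ext) :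
  scale a (\sum_(i <- s | P i) f i) = \sum_(i <- s | P i) scale a (f i).
Proof.
apply/ffunP => S; rewrite ffunE !sum_ffunE mulr_sumr.
by apply: eq_bigr => i _; rewrite ffunE.
Qed.

Lemma ext_mulDl u v w : mul (u + v) w = mul u w + mul v w.
Proof.
apply/ffunP => S; rewrite !ffunE -big_split; apply: eq_bigr => A _.
by rewrite -big_split; apply: eq_bigr => B _; rewrite !ffunE mulrDr mulrDl.
Qed.

Lemma ext_mulDr u v w : mul u (v + w) = mul u v + mul u w.
Proof.
apply/ffunP => S; rewrite !ffunE -big_split; apply: eq_bigr => A _.
by rewrite -big_split; apply: eq_bigr => B _; rewrite !ffunE mulrDr.
Qed.

Lemma ext_mulZl a u v : mul (scale a u) v = scale a (mul u v).
Proof.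
apply/ffunP => S; rewrite !ffunE mulr_sumr; apply: eq_bigr => A _.
by rewrite mulr_sumr; apply: eq_bigr => B _; rewrite !ffunE; ring.
Qed.

Lemma ext_mulZr a u v : mul u (scale a v) = scale a (mul u v).
Proof.
apply/ffunP => S; rewrite !ffunE mulr_sumr; apply: eq_bigr => A _.
by rewrite mulr_sumr; apply: eq_bigr => B _; rewrite !ffunE; ring.
Qed.

Lemma ext_mul0l u : mul 0 u = 0.
Proof. by rewrite -[X in mul X u](ext_scale0 0) ext_mulZl ext_scale0. Qed.

Lemma ext_mul0r u : mul u 0 = 0.
Proof. by rewrite -[X in mul u X](ext_scale0 0) ext_mulZr ext_scale0. Qed.

Lemma ext_mul_suml (I : Type) (s : seq I) (P : pred I) (f : I -> ext) v :
  mul (\sum_(i <- s | P i) f i) v = \sum_(i <- s | P i) mul (f i) v.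
Proof.
elim: s => [|x s IH]; first by rewrite !big_nil ext_mul0l.
by rewrite !big_cons; case: (P x); rewrite ?ext_mulDl IH.
Qed.

Lemma ext_mul_sumr (I : Type) (s : seq I) (P : pred I) (f : I -> ext) v :
  mul v (\sum_(i <- s | P i) f i) = \sum_(i <- s | P i) mul v (f i).
Proof.
elim: s => [|x s IH]; first by rewrite !big_nil ext_mul0r.
by rewrite !big_cons; case: (P x); rewrite ?ext_mulDr IH.
Qed.

Definition ext_basis A : ext := [ffun S => (S == A)%:R].

Lemma ext_basis_decomp u : u = \sum_A scale (u A) (ext_basis A).
Proof.
apply/ffunP => S; rewrite sum_ffunE (bigD1 S) //= big1 ?addr0.
  by rewrite !ffunE eqxx mulr1.
by move=> A /negPf nAS; rewrite !ffunE eq_sym nAS mulr0.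
Qed.

Lemma ext_mul_basis A B : mul (ext_basis A) (ext_basis B) =
  if [disjoint A & B] then scale (ext_sign F A B) (ext_basis (A :|: B)) else 0.
Proof.
apply/ffunP => S; rewrite ffunE (bigD1 A) //= [X in _ + X]big1 ?addr0; last first.
  move=> A' /negPf nA; rewrite big1 // => B' _.
  by rewrite !ffunE nA mulr0 mul0r.
rewrite big_mkcond (bigD1 B) //= [X in _ + X]big1 ?addr0; last first.
  by move=> B' /negPf nB; rewrite !ffunE nB mulr0 if_same.
rewrite !ffunE !eqxx !mulr1.
case: [disjoint A & B]; rewrite /= ?ffunE //.
by rewrite eq_sym; case: eqP; rewrite ?mulr0 ?mulr1.
Qed.

Lemma disjoint_setUl A B C :
  [disjoint A :|: B & C] = [disjoint A & C] && [disjoint B & C].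
Proof. by rewrite -!setI_eq0 setIUl setU_eq0. Qed.

Lemma disjoint_setUr A B C :
  [disjoint A & B :|: C] = [disjoint A & B] && [disjoint A & C].
Proof. by rewrite -!setI_eq0 setIUr setU_eq0. Qed.

Definition inversions A B : {set 'I_(n + n) * 'I_(n + n)} :=
  [set p | [&& p.1 \in A, p.2 \in B & (p.2 < p.1)%N]].

Lemma ext_signE A B : ext_sign F A B = (-1) ^+ #|inversions A B|.
Proof. by []. Qed.

Lemma ext_sign0l A : ext_sign F set0 A = 1.
Proof.
rewrite ext_signE (_ : inversions _ _ = set0) ?cards0 ?expr0 //.
by apply/setP => p; rewrite !inE.
Qed.

Lemma ext_sign0r A : ext_sign F A set0 = 1.
Proof.
rewrite ext_signE (_ : inversions _ _ = set0) ?cards0 ?expr0 //.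
by apply/setP => p; rewrite !inE andbF.
Qed.

Lemma ext_signUl A B C : [disjoint A & B] ->
  ext_sign F (A :|: B) C = ext_sign F A C * ext_sign F B C.
Proof.
move=> dAB; rewrite !ext_signE -exprD -cardsUI.
have -> : inversions (A :|: B) C = inversions A C :|: inversions B C.
  by apply/setP => p; rewrite !inE andb_orl.
have -> : inversions A C :&: inversions B C = set0.
  apply/setP => p; rewrite !inE; case pA: (p.1 \in A) => //=.
  by rewrite (disjointFr dAB pA) andbF.
by rewrite cards0 addn0.
Qed.

Lemma ext_signUr A B C : [disjoint B & C] ->
  ext_sign F A (B :|: C) = ext_sign F A B * ext_sign F A C.
Proof.
move=> dBC; rewrite !ext_signE -exprD -cardsUI.
have -> : inversions A (B :|: C) = inversions A B :|: inversions A C.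
  by apply/setP => p; rewrite !inE andb_orl andb_orr.
have -> : inversions A B :&: inversions A C = set0.
  apply/setP => p; rewrite !inE; case pB: (p.2 \in B) => /=; last by rewrite andbF.
  by rewrite (disjointFr dBC pB) !andbF.
by rewrite cards0 addn0.
Qed.

Lemma ext_mul_basisA A B C :
  mul (mul (ext_basis A) (ext_basis B)) (ext_basis C) =
  mul (ext_basis A) (mul (ext_basis B) (ext_basis C)).
Proof.
rewrite !ext_mul_basis.
case dAB: [disjoint A & B]; case dBC: [disjoint B & C];
  rewrite ?ext_mul0l ?ext_mul0r ?ext_mulZl ?ext_mulZr ?ext_mul_basis;
  rewrite ?disjoint_setUl ?disjoint_setUr ?dAB ?dBC ?andbF ?ext_scaler0 //=.
rewrite ?andbT; case: [disjoint A & C]; rewrite ?ext_scaler0 //.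
by rewrite !ext_scaleA setUA ext_signUl // ext_signUr //; congr scale; ring.
Qed.

Lemma ext_mulA u v w : mul (mul u v) w = mul u (mul v w).
Proof.
have basis2A A B w' : mul (mul (ext_basis A) (ext_basis B)) w' =
                      mul (ext_basis A) (mul (ext_basis B) w').
  rewrite [w']ext_basis_decomp !ext_mul_sumr; apply: eq_bigr => C _.
  by rewrite !ext_mulZr ext_mul_basisA.
have basisA A v' w' : mul (mul (ext_basis A) v') w' = mul (ext_basis A) (mul v' w').
  rewrite [v']ext_basis_decomp !(ext_mul_sumr, ext_mul_suml); apply: eq_bigr => B _.
  by rewrite !(ext_mulZl, ext_mulZr) basis2A.
rewrite [u]ext_basis_decomp !ext_mul_suml; apply: eq_bigr => A _.
by rewrite !ext_mulZl basisA.
Qed.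

Lemma ext_mul1l u : mul one u = u.
Proof.
rewrite [u]ext_basis_decomp ext_mul_sumr; apply: eq_bigr => B _.
by rewrite ext_mulZr ext_mul_basis -setI_eq0 set0I eqxx ext_sign0l set0U ext_scale1.
Qed.

Lemma ext_mul1r u : mul u one = u.
Proof.
rewrite [u]ext_basis_decomp ext_mul_suml; apply: eq_bigr => B _.
by rewrite ext_mulZl ext_mul_basis -setI_eq0 setI0 eqxx ext_sign0r setU0 ext_scale1.
Qed.

Lemma ext_expS u k : ext_exp u k.+1 = mul u (ext_exp u k).
Proof. by rewrite /ext_exp iterS. Qed.

Lemma ext_expZ a u k : ext_exp (scale a u) k = scale (a ^+ k) (ext_exp u k).
Proof.
elim: k => [|k IH]; first by rewrite expr0 ext_scale1.
by rewrite !ext_expS IH ext_mulZl ext_mulZr ext_scaleA exprS.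
Qed.

Section Ideal.
Variables (I : Type) (g : I -> ext).
Local Notation ideal := (in_ideal g).

Lemma in_ideal0 : ideal 0.
Proof. by exists [::]; rewrite /= ext_zeroE. Qed.

Lemma in_idealD u v : ideal u -> ideal v -> ideal (u + v).
Proof. by move=> [l1 ->] [l2 ->]; exists (l1 ++ l2); rewrite !ext_sumE big_cat. Qed.

Lemma in_idealMl u v : ideal v -> ideal (mul u v).
Proof.
move=> [l ->]; exists [seq (mul u t.1.1, t.1.2, t.2) | t <- l].
by rewrite !ext_sumE big_map ext_mul_sumr; apply: eq_bigr => t _; rewrite !ext_mulA.
Qed.

Lemma in_idealMr u v : ideal u -> ideal (mul u v).
Proof.
move=> [l ->]; exists [seq (t.1.1, t.1.2, mul t.2 v) | t <- l].
by rewrite !ext_sumE big_map ext_mul_suml; apply: eq_bigr => t _; rewrite !ext_mulA.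
Qed.

Lemma in_idealZ a u : ideal u -> ideal (scale a u).
Proof.
by move=> Ju; rewrite -[u]ext_mul1l -ext_mulZl; apply: in_idealMl.
Qed.

Lemma in_idealB u v : ideal u -> ideal v -> ideal (u - v).
Proof.
by move=> Ju Jv; apply: in_idealD => //; rewrite -ext_scaleN1; apply: in_idealZ.
Qed.

Lemma in_idealZK a u : a != 0 -> ideal (scale a u) -> ideal u.
Proof.
by move=> a0 /(in_idealZ a^-1); rewrite ext_scaleA mulVf // ext_scale1.
Qed.

Lemma in_ideal_gen i : ideal (g i).
Proof.
exists [:: (one, i, one)].
by rewrite /= ext_addE ext_zeroE addr0 ext_mul1l ext_mul1r.
Qed.

Lemma in_ideal_sum (K : Type) (s : seq K) (P : pred K) (f : K -> ext) :
  (forall k, P k -> ideal (f k)) -> ideal (\sum_(k <- s | P k) f k).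
Proof.
move=> Jf; elim: s => [|k s IH]; first by rewrite big_nil; apply: in_ideal0.
by rewrite big_cons; case Pk: (P k) => //; apply: in_idealD => //; apply: Jf.
Qed.

Lemma in_ideal_exp u k : (0 < k)%N -> ideal u -> ideal (ext_exp u k).
Proof. by case: k => // k _ Ju; rewrite ext_expS; apply: in_idealMr. Qed.

End Ideal.

Lemma in_ideal_subgens (I1 I2 : Type) (g1 : I1 -> ext) (g2 : I2 -> ext)
    (phi : I1 -> I2) u :
  (forall i, g1 i = g2 (phi i)) -> in_ideal g1 u -> in_ideal g2 u.
Proof.
move=> g12 [l ->]; exists [seq (t.1.1, phi t.1.2, t.2) | t <- l].
by rewrite !ext_sumE big_map; apply: eq_bigr => t _; rewrite g12.
Qed.

End ExteriorAlgebra.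

Section Evaluation.
Variables (F : fieldType) (n m : nat).
Local Notation ext := {ffun {set 'I_(n + n)} -> F}.
Local Notation one := (ext_one F n).
Variable v : 'I_m -> ext.

Definition ext_monom (mm : 'X_{1..m}) (s : seq 'I_m) : ext :=
  foldr (fun i acc => ext_mul (ext_exp (v i) (mm i)) acc) one s.

Lemma ext_evalE (P : {mpoly F[m]}) :
  ext_eval P v = \sum_(mm <- msupp P) ext_scale P@_mm (ext_monom mm (enum 'I_m)).
Proof. by rewrite /ext_eval ext_sumE. Qed.

Lemma ext_monom0 s : ext_monom 0%MM s = one.
Proof. by elim: s => //= i s ->; rewrite mnm0E ext_mul1l. Qed.

Lemma ext_monom_single (mm : 'X_{1..m}) (s : seq 'I_m) i0 :
  uniq s -> (forall i, i != i0 -> mm i = 0%N) ->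
  ext_monom mm s = if i0 \in s then ext_exp (v i0) (mm i0) else one.
Proof.
move=> + mm0; elim: s => [|j s IH] //= /andP[js us]; rewrite inE IH //.
have [<-|ji0] := eqVneq j i0; first by rewrite (negPf js) ext_mul1r.
by rewrite mm0 //= ext_mul1l.
Qed.

Lemma ext_evalC a : ext_eval a%:MP v = ext_scale a one.
Proof.
rewrite ext_evalE msuppC; case: eqP => [->|_]; first by rewrite big_nil ext_scale0.
by rewrite big_seq1 mcoeffC eqxx mulr1 ext_monom0.
Qed.

Section Ideal.
Variables (I : Type) (g : I -> ext).

Lemma in_ideal_ext_monom (mm : 'X_{1..m}) (s : seq 'I_m) i :
  i \in s -> (0 < mm i)%N -> in_ideal g (v i) -> in_ideal g (ext_monom mm s).
Proof.
move=> + mi Jv; elim: s => [|j s IH] //=; rewrite inE => /orP[/eqP <-|iS].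
  by apply: in_idealMr; apply: in_ideal_exp.
by apply: in_idealMl; apply: IH.
Qed.

Lemma in_ideal_ext_eval (P : {mpoly F[m]}) :
  P@_0 = 0 -> (forall i, in_ideal g (v i)) -> in_ideal g (ext_eval P v).
Proof.
move=> P0 Jv; rewrite ext_evalE big_seq; apply: in_ideal_sum => mm mmP.
apply: in_idealZ; have [i /= mi|mm_eq0] := pickP (fun i => 0 < mm i)%N.
  by apply: (in_ideal_ext_monom (i := i)) => //; rewrite mem_enum.
suff mm0 : mm = 0%MM by rewrite mcoeff_msupp mm0 P0 eqxx in mmP.
by apply/mnmP => i; rewrite mnm0E; apply/eqP; rewrite -leqn0 leqNgt mm_eq0.
Qed.

Lemma in_ideal_ext_eval_sub_pow (P : {mpoly F[m]}) i0 D :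
  (forall i, i != i0 -> in_ideal g (v i)) ->
  (forall mm, mm \in msupp P -> (forall i, i != i0 -> mm i = 0%N) ->
     mm = (U_(i0) *+ D)%MM) ->
  in_ideal g (ext_eval P v - ext_scale P@_(U_(i0) *+ D) (ext_exp (v i0) D)).
Proof.
move=> Jv Ppure; set m0 := (U_(i0) *+ D)%MM.
have m0E i : m0 i = if i == i0 then D else 0%N.
  by rewrite mulmnE mnm1E eq_sym; case: eqP; rewrite ?mul1n.
have other_in mm : mm \in msupp P -> mm != m0 ->
    in_ideal g (ext_scale P@_mm (ext_monom mm (enum 'I_m))).
  move=> mmP mm_m0; apply: in_idealZ.
  have [i /andP[ii0 mi]|pure] := pickP (fun i => (i != i0) && (0 < mm i)%N).
    by apply: (in_ideal_ext_monom (i := i)) => //; [rewrite mem_enum|apply: Jv].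
  case/eqP: mm_m0; apply: Ppure => // i ii0.
  by move: (pure i); rewrite /= ii0 lt0n => /negbFE/eqP.
rewrite ext_evalE; have [m0P|m0N] := boolP (m0 \in msupp P); last first.
  rewrite (memN_msupp_eq0 m0N) ext_scale0 subr0 big_seq.
  by apply: in_ideal_sum => mm mmP; apply: other_in => //; apply: contraNneq m0N => <-.
rewrite (bigD1_seq m0) ?msupp_uniq //= (@ext_monom_single _ _ i0) ?enum_uniq //.
  rewrite mem_enum m0E eqxx addrAC subrr add0r big_seq_cond.
  by apply: in_ideal_sum => mm /andP[]; apply: other_in.
by move=> i ii0; rewrite m0E (negPf ii0).
Qed.

End Ideal.
End Evaluation.

Section Hessian.
Variables (F : fieldType) (n : nat).
Implicit Types p q : {mpoly F[n]}.

Definition hessian0 p : 'M[F]_n := \matrix_(k, j) (mderiv j (mderiv k p))@_0.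

Lemma hessian0_sym p k j : hessian0 p k j = hessian0 p j k.
Proof. by rewrite !mxE mderiv_comm. Qed.

Lemma hessian0B p q : hessian0 (p - q) = hessian0 p - hessian0 q.
Proof. by apply/matrixP => k j; rewrite !mxE !mderivB mcoeffB. Qed.

Lemma hessian0Z a p : hessian0 (a *: p) = a *: hessian0 p.
Proof. by apply/matrixP => k j; rewrite !mxE !mderivZ mcoeffZ. Qed.

Lemma msupp_mderiv2_mdeg p d a b mm : p \is d.-homog ->
  mm \in msupp (mderiv b (mderiv a p)) -> (mdeg mm + 2 = d)%N.
Proof.
move=> hp; rewrite mcoeff_msupp !mcoeff_mderiv => nz.
have : (mm + U_(b) + U_(a))%MM \in msupp p.
  by rewrite mcoeff_msupp; apply: contraNneq nz => ->; rewrite !mul0rn.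
by move=> /(dhomog_mf hp) /= <-; rewrite !mdegD !mdeg1 -addnA.
Qed.

Lemma mderiv2_dhomog2 p a b : p \is 2.-homog ->
  mderiv b (mderiv a p) = (hessian0 p a b)%:MP.
Proof.
move=> hp; apply/mpolyP => mm; rewrite mcoeffC mxE.
have [->|nz] := eqVneq mm 0%MM; first by rewrite mulr1.
rewrite mulr0; apply/eqP; rewrite mcoeff_eq0; apply/negP.
move=> /(msupp_mderiv2_mdeg hp) /eqP; rewrite -[2%N in X in X -> _]add0n eqn_add2r.
by rewrite mdeg_eq0 (negPf nz).
Qed.

Lemma mderiv_X (b l : 'I_n) : mderiv l ('X_b : {mpoly F[n]}) = ((b == l)%:R)%:MP.
Proof.
rewrite mderivX mnm1E; case: eqP => [->|_]; last by rewrite scale0r mpolyC0.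
have -> : (U_(l) - U_(l))%MM = 0%MM by apply/mnmP => i; rewrite mnmBE subnn mnm0E.
by rewrite mpolyX0 scale1r mpolyC1.
Qed.

Lemma sum_delta (f : 'I_n -> F) l : \sum_b (b == l)%:R * f b = f l.
Proof.
rewrite (bigD1 l) //= eqxx mul1r big1 ?addr0 // => b /negPf ->.
by rewrite mul0r.
Qed.

(* Differentiate the invariance condition twice at the origin. *)
Lemma invariant_hessian0_identity (c : 'I_n -> 'I_n -> 'I_n -> F) p :
  p \is 2.-homog -> invariant_poly c p -> forall a l j,
  \sum_k c a l k * hessian0 p k j + \sum_k c a j k * hessian0 p k l = 0.
Proof.
move=> hp inv a l j; set D2 := fun q : {mpoly F[n]} => (mderiv j (mderiv l q))@_0.
have D2_sum (q : 'I_n -> {mpoly F[n]}) : D2 (\sum_b q b) = \sum_b D2 (q b).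
  by rewrite /D2 (raddf_sum (mderiv (R:=F) l)) (raddf_sum (mderiv (R:=F) j))
    (raddf_sum (mcoeff (R:=F) 0%MM)).
have D2_term b k : D2 ('X_b * mderiv k p) =
    (b == l)%:R * hessian0 p k j + (b == j)%:R * hessian0 p k l.
  rewrite /D2 !mderivM !mderiv_X !mderivD !mderivM !mderiv_X !mderivC.
  rewrite [mderiv l (mderiv k p)]mderiv2_dhomog2 // mderivC mul0r mulr0 add0r addr0.
  by rewrite mcoeffD !mcoeffCM mcoeffC eqxx mulr1 [hessian0 p k j]mxE.
have D2_summand b : D2 (\sum_k c a b k *: ('X_b * mderiv k p)) =
    \sum_k ((b == l)%:R * (c a b k * hessian0 p k j)
           + (b == j)%:R * (c a b k * hessian0 p k l)).
  rewrite D2_sum; apply: eq_bigr => k _.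
  by rewrite /D2 !mderivZ mcoeffZ -/(D2 _) D2_term; ring.
rewrite -[RHS](_ : D2 0 = 0); last by rewrite /D2 !mderiv0 mcoeff0.
rewrite -(inv a) D2_sum (eq_bigr _ (fun b _ => D2_summand b)) exchange_big -big_split /=.
by apply: eq_bigr => k _; rewrite big_split /= !sum_delta.
Qed.

End Hessian.

(* A monomial [U_(a) + U_(b)] of [p] reappears, times a positive integer, as the
   Hessian entry [(a, b)]. *)
Lemma dhomog2_hessian0_eq0 (F : fieldType) n (p : {mpoly F[n]}) :
  [pchar F] =i pred0 -> p \is 2.-homog -> hessian0 p = 0 -> p = 0.
Proof.
move=> /pcharf0P F0 hp H0.
have mulrnS_eq0 (x : F) k : (x *+ k.+1 == 0) = (x == 0).
  by rewrite -mulr_natr mulf_eq0 F0 orbF.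
apply/mpolyP => mm; rewrite mcoeff0; apply/eqP.
rewrite mcoeff_eq0; apply/negP => mmP; have /= dmm := dhomog_mf hp mmP.
have [a /= mma|mm0] := pickP (fun a => mm a != 0%N); last first.
  suff : mm = 0%MM by move=> mm_eq0; rewrite mm_eq0 mdeg0 in dmm.
  by apply/mnmP => i; rewrite mnm0E; apply/eqP/negbFE/mm0.
have mmE : (mm - U_(a) + U_(a) = mm)%MM by apply: submK; rewrite lep1mP.
have /mdeg1P[b /eqP mmbE] : mdeg (mm - U_(a))%MM == 1%N.
  by rewrite -(eqn_add2r 1) -[X in (_ + X == _)%N](mdeg1 a) -mdegD mmE dmm.
move: mmP; rewrite mcoeff_msupp => /negPf p_mm.
have /matrixP/(_ a b) := H0; rewrite !mxE !mcoeff_mderiv add0m -mmbE mmE.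
by move/eqP; rewrite !mulrnS_eq0 p_mm.
Qed.

Section LieAlgebra.
Variables (F : fieldType) (n : nat) (c : 'I_n -> 'I_n -> 'I_n -> F).

Lemma ad_mxE (w : 'rV[F]_n) i j : ad_mx c w i j = \sum_a w 0 a * c a i j.
Proof.
rewrite !mxE; apply: eq_bigr => a _; rewrite (bigD1 i) //= big1 => [|b bi].
  by rewrite !mxE eqxx mulr1 addr0.
by rewrite !mxE eq_sym (negPf bi) mulr0 mul0r.
Qed.

Lemma ad_mx_basis a i j : ad_mx c (basis_vec F a) i j = c a i j.
Proof.
rewrite ad_mxE (bigD1 a) //= big1 => [|b ba]; first by rewrite mxE eqxx mul1r addr0.
by rewrite mxE eq_sym (negPf ba) mul0r.
Qed.

Lemma ad_mx_sum_basis (w : 'rV[F]_n) :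
  ad_mx c w = \sum_a w 0 a *: ad_mx c (basis_vec F a).
Proof.
apply/matrixP => i j; rewrite ad_mxE summxE.
by apply: eq_bigr => a _; rewrite mxE ad_mx_basis.
Qed.

Lemma mul_ad_mx (u w : 'rV[F]_n) : u *m ad_mx c w = lie_br c w u.
Proof.
apply/rowP => k; rewrite !mxE exchange_big; apply: eq_bigr => a _ /=.
by rewrite ad_mxE mulr_sumr; apply: eq_bigr => b _; ring.
Qed.

Lemma lie_br_basis a b k : lie_br c (basis_vec F a) (basis_vec F b) 0 k = c a b k.
Proof.
rewrite -mul_ad_mx mxE (bigD1 b) //= big1 => [|i ib].
  by rewrite mxE eqxx mul1r ad_mx_basis addr0.
by rewrite mxE eq_sym (negPf ib) mul0r.
Qed.

Lemma mul_basis_tr (u : 'rV[F]_n) j : (u *m (basis_vec F j)^T) 0 0 = u 0 j.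
Proof.
rewrite mxE (bigD1 j) //= big1 => [|i ij]; first by rewrite !mxE eqxx mulr1 addr0.
by rewrite !mxE eq_sym (negPf ij) mulr0.
Qed.

Lemma basis_mul_tr (u : 'rV[F]_n) k : (basis_vec F k *m u^T) 0 0 = u 0 k.
Proof.
rewrite mxE (bigD1 k) //= big1 => [|i ik]; first by rewrite !mxE eqxx mul1r addr0.
by rewrite !mxE eq_sym (negPf ik) mul0r.
Qed.

Hypothesis Hlie : is_orthonormal_lie c.

(* Antisymmetry of the bracket combined with invariance of the form. *)
Lemma structure_const_skew a k j : c a k j = - c a j k.
Proof.
case: Hlie => anti _ inv.
have c_anti b : c b a j = - c a b j.
  by rewrite -[c b a j]lie_br_basis anti [LHS]mxE lie_br_basis.
have /matrixP/(_ 0 0) := inv (basis_vec F k) (basis_vec F a) (basis_vec F j).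
by rewrite mul_basis_tr basis_mul_tr !lie_br_basis c_anti => <-; rewrite opprK.
Qed.

End LieAlgebra.

Section SimpleLieAlgebra.
Variables (C : numClosedFieldType) (n : nat) (c : 'I_n -> 'I_n -> 'I_n -> C).
Hypotheses (Hlie : is_orthonormal_lie c) (Hsimple : lie_simple c).

(* Schur's lemma: for an eigenvalue [lam] of [M], the kernel of [M - lam] is a
   nonzero ideal. *)
Lemma lie_simple_commute_scalar (M : 'M[C]_n) :
  (forall a, ad_mx c (basis_vec C a) *m M = M *m ad_mx c (basis_vec C a)) ->
  exists lam, M = lam%:M.
Proof.
move=> commM; have [n0|n_gt0] := posnP n.
  by exists 0; apply/matrixP => i; have := ltn_ord i; rewrite {2}n0.
have [lam /eigenvalueP[v vM v_neq0]] := eigenvalue_closed M n_gt0.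
exists lam; set A := M - lam%:M.
have commA w : ad_mx c w *m A = A *m ad_mx c w.
  rewrite ad_mx_sum_basis mulmx_suml mulmx_sumr; apply: eq_bigr => a _.
  by rewrite -scalemxAl -scalemxAr /A mulmxBr mulmxBl commM scalar_mxC.
have ker_ideal : lie_ideal c (kermx A).
  move=> u w /sub_kermxP uA; apply/sub_kermxP; case: Hlie => anti _ _.
  by rewrite anti -mul_ad_mx mulNmx -mulmxA commA mulmxA uA mul0mx oppr0.
case: Hsimple => _ /(_ _ ker_ideal) [/eqP|].
  rewrite mxrank_eq0 => /eqP ker0; case/negP: v_neq0; rewrite -submx0 -ker0.
  by apply/sub_kermxP; rewrite /A mulmxBr vM mul_mx_scalar subrr.
rewrite mxrank_ker => rA; have /eqP : \rank A = 0%N by have := rank_leq_row A; lia.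
by rewrite mxrank_eq0 subr_eq0 => /eqP.
Qed.

Lemma dhomog2_invariant_hessian0_scalar (p : {mpoly C[n]}) :
  p \is 2.-homog -> invariant_poly c p -> exists lam, hessian0 p = lam%:M.
Proof.
move=> hp inv; apply: lie_simple_commute_scalar => a; apply/matrixP => l j.
rewrite !mxE; under eq_bigr do rewrite ad_mx_basis.
move/eqP: (invariant_hessian0_identity hp inv a l j); rewrite addr_eq0 => /eqP ->.
rewrite -sumrN; apply: eq_bigr => k _.
by rewrite ad_mx_basis (structure_const_skew Hlie a k j) (hessian0_sym p k l) mulrN mulrC.
Qed.

End SimpleLieAlgebra.

Lemma comp_mpolyX_tuple (F : nzRingType) n r (p : 'I_r -> {mpoly F[n]}) i :
  comp_mpoly [tuple p j | j < r] 'X_i = p i.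
Proof. by rewrite comp_mpolyXU -tnth_nth tnth_mktuple. Qed.

Lemma invariant_generators_neq0 (F : fieldType) n r (c : 'I_n -> 'I_n -> 'I_n -> F)
    (p : 'I_r -> {mpoly F[n]}) d i :
  invariant_generators c p d -> p i != 0.
Proof.
case=> _ _ _ indep _; apply/eqP; rewrite -comp_mpolyX_tuple => /indep.
by move/(congr1 (mcoeff U_(i))); rewrite mcoeffXU eqxx mcoeff0 => /eqP; rewrite oner_eq0.
Qed.

Lemma wt_homog_pure (F : fieldType) r (d : 'I_r -> nat) D (f : {mpoly F[r]}) i0 mm :
  d i0 = 2%N -> wt_homog d D f -> mm \in msupp f ->
  (forall i, i != i0 -> mm i = 0%N) -> mm = (U_(i0) *+ D)%MM.
Proof.
move=> d0 fD mmf mm0; have := fD _ mmf; rewrite (bigD1 i0) //= big1 ?addn0.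
  rewrite d0 muln1 => mmD; apply/mnmP => i; rewrite mulmnE mnm1E.
  by have [<-|ii0] := eqVneq i0 i; rewrite ?mul1n // mm0 // eq_sym.
by move=> i /mm0 ->.
Qed.

Section QuadraticGenerator.
Variables (C : numClosedFieldType) (n r : nat) (c : 'I_n -> 'I_n -> 'I_n -> C).
Variables (p : 'I_r -> {mpoly C[n]}) (d : 'I_r -> nat).
Hypotheses (Hlie : is_orthonormal_lie c) (Hsimple : lie_simple c).
Hypothesis Hp : invariant_generators c p d.

(* Both Hessians are scalar, so a suitable combination of [p i] and [p j] has zero
   Hessian and vanishes, against algebraic independence. *)
Lemma invariant_generators_quadratic_unique i j : d i = 2%N -> d j = 2%N -> i = j.
Proof.
move=> di dj; case: (Hp) => inv p_homog _ indep _.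
have homog2 k : d k = 2%N -> p k \is 2.-homog by move=> <-; apply: p_homog.
have [lami Hi] := dhomog2_invariant_hessian0_scalar Hlie Hsimple (homog2 _ di) (inv i).
have [lamj Hj] := dhomog2_invariant_hessian0_scalar Hlie Hsimple (homog2 _ dj) (inv j).
have : lamj *: p i - lami *: p j = 0.
  apply: dhomog2_hessian0_eq0; [exact: pchar_num | by rewrite rpredB ?rpredZ ?homog2|].
  by rewrite hessian0B !hessian0Z Hi Hj !scale_scalar_mx mulrC subrr.
rewrite -(comp_mpolyX_tuple p i) -(comp_mpolyX_tuple p j) -!comp_mpolyZ -comp_mpolyB.
move=> /indep.
move/(congr1 (mcoeff U_(i))); rewrite mcoeffB !mcoeffZ !mcoeffXU eqxx mcoeff0 mulr1.
have [//|_] := eqVneq j i; rewrite mulr0 subr0 => lamj0.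
case/negP: (invariant_generators_neq0 j Hp); apply/eqP.
apply: dhomog2_hessian0_eq0; [exact: pchar_num | exact: homog2|].
by rewrite Hj lamj0 raddf0.
Qed.

End QuadraticGenerator.

Section Hat.
Variables (F : fieldType) (n : nat) (c : 'I_n -> 'I_n -> 'I_n -> F).

Lemma in_ideal_gens_JI u : in_ideal (gens_J c) u -> in_ideal (gens_I c) u.
Proof.
apply: (in_ideal_subgens (phi := fun k : 'I_n * bool =>
  (k.1, if k.2 then Ordinal (isT : (0 < 3)%N) else Ordinal (isT : (2 < 3)%N)))).
by case=> k [].
Qed.

(* Every entry of the Hessian of [p] has positive degree in the coefficients of
   [{X,Y}], which lie in [I]. *)
Lemma in_ideal_hat (p : {mpoly F[n]}) d : p \is d.-homog -> (2 < d)%N ->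
  in_ideal (gens_I c) (hat c p).
Proof.
move=> hp d_gt2; rewrite /hat ext_sumE; apply: in_ideal_sum => a _.
rewrite ext_sumE; apply: in_ideal_sum => b _; apply: in_idealMr.
apply: in_ideal_ext_eval => [|k]; last first.
  exact: (in_ideal_gen (gens_I c) (k, Ordinal (isT : (1 < 3)%N))).
apply/eqP; rewrite mcoeff_eq0; apply/negP => /(msupp_mderiv2_mdeg hp).
by rewrite mdeg0 add0n => d2; rewrite -d2 in d_gt2.
Qed.

Lemma hat_dhomog2 (p : {mpoly F[n]}) lam : p \is 2.-homog -> hessian0 p = lam%:M ->
  hat c p = ext_scale lam (S_elt F n).
Proof.
move=> hp Hp; rewrite /hat /S_elt !ext_sumE ext_scale_sum; apply: eq_bigr => a _.
rewrite ext_sumE (bigD1_seq a) ?mem_enum ?enum_uniq //= big1 => [|b ba].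
  by rewrite mderiv2_dhomog2 // Hp mxE eqxx mulr1n ext_evalC ext_mulZl ext_mul1l addr0.
by rewrite mderiv2_dhomog2 // Hp mxE eq_sym (negPf ba) mulr0n ext_evalC ext_scale0 ext_mul0l.
Qed.

End Hat.

Unset Implicit Arguments.

Theorem proposition2p9 (R : realType) (n : nat)
  (c : 'I_n -> 'I_n -> 'I_n -> Cplx R)
  (Hlie : is_orthonormal_lie c) (Hsimple : lie_simple c)
  (hv : nat) (Hhv : dual_coxeter c hv)
  (r : nat) (hr : (0 < r)%N)
  (p : 'I_r -> {mpoly (Cplx R)[n]}) (d : 'I_r -> nat)
  (Hp : invariant_generators c p d)
  (f : {mpoly (Cplx R)[r]})
  (Hf_homog : wt_homog d hv f)
  (Hf_rel : in_ideal (gens_J c) (ext_eval f (fun i => hat c (p i))))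
  (Hf_coef : f@_(mnm1 (Ordinal hr) *+ hv)%MM != 0) :
  in_ideal (gens_I c) (ext_exp (S_elt (Cplx R) n) hv).
Proof.
have [inv p_homog _ _ [d_sorted d0]] := Hp; set i0 := Ordinal hr.
have d_i0 : d i0 = 2%N by exact: d0.
have hp0 : p i0 \is 2.-homog by rewrite -d_i0.
have [lam Hlam] := dhomog2_invariant_hessian0_scalar Hlie Hsimple hp0 (inv i0).
have lam_neq0 : lam != 0.
  apply: contra (invariant_generators_neq0 i0 Hp) => /eqP lam0; apply/eqP.
  by apply: dhomog2_hessian0_eq0 hp0 _; [exact: pchar_num | rewrite Hlam lam0 raddf0].
have hat_in i : i != i0 -> in_ideal (gens_I c) (hat c (p i)).
  move=> ii0; apply: in_ideal_hat (p_homog i) _; rewrite ltn_neqAle eq_sym.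
  rewrite -[X in (X <= _)%N]d_i0 d_sorted // andbT; apply: contra ii0 => /eqP di.
  exact/eqP/(invariant_generators_quadratic_unique Hlie Hsimple Hp di d_i0).
have := in_ideal_ext_eval_sub_pow hat_in (fun mm => wt_homog_pure d_i0 Hf_homog).
rewrite /= (hat_dhomog2 _ hp0 Hlam) ext_expZ ext_scaleA => Hdiff.
apply: (in_idealZK (mulf_neq0 Hf_coef (expf_neq0 hv lam_neq0))).
rewrite -[ext_scale _ _](subKr (ext_eval f (fun i => hat c (p i)))).
exact: in_idealB (in_ideal_gens_JI Hf_rel) Hdiff.
Qed.
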